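(* Fix a positive integer $r$ and a positive integer $s$, and let $x_1,\dots,x_s,y_1,\dots,y_s,X,Y$ be real numbers with $r<x_i\leq y_i$ for all $i\in\{1,\dots,s\}$. If $Y\geq\max(x_1,\dots,x_s)$ and $\displaystyle X\prod_{i=1}^s x_i<Y\prod_{i=1}^s y_i$, then $\displaystyle (X-r)\prod_{i=1}^s(x_i-r)<(Y-r)\prod_{i=1}^s(y_i-r)$. *)

From mathcomp Require Import all_boot all_order all_algebra.
From mathcomp Require Import reals.

From mathcomp Require Import all_boot all_order all_algebra.
From mathcomp Require Import reals.
From mathcomp Require Import ring lra.
Import Order.TTheory GRing.Theory Num.Theory.
Local Open Scope ring_scope.

(* The last pair x_n <= y_n is absorbed
   into the bound: X * prod x < Y * prod y is the same inequality as
   X * prod_{i<n} x_i < Y' * prod_{i<n} y_i with Y' = Y y_n / x_n >= Y, so the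
   induction hypothesis applies with Y'.  It remains to see that shifting by r
   loses nothing, i.e. (Y' - r)(x_n - r) <= (Y - r)(y_n - r); this holds because
   Y + y_n - Y' - x_n = -(Y - x_n)(y_n - x_n)/x_n <= 0. *)

Lemma shift_absorb_le {R : realFieldType} (r x y Y : R) :
  0 <= r -> r < x -> x <= y -> x <= Y ->
  (Y * y / x - r) * (x - r) <= (Y - r) * (y - r).
Proof.
move=> r_ge0 rx xy xY; have x_gt0 : 0 < x by lra.
have x_neq0 : x != 0 by rewrite gt_eqF.
have defect : (Y + y - Y * y / x - x) * x = - ((Y - x) * (y - x)) by field.
have defect_le0 : Y + y - Y * y / x - x <= 0.
  have : 0 <= (Y - x) * (y - x) by apply: mulr_ge0; lra.
  nra.
have expand : (Y * y / x - r) * (x - r) - (Y - r) * (y - r)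
              = r * (Y + y - Y * y / x - x) by field.
have : r * (Y + y - Y * y / x - x) <= 0 by apply: mulr_ge0_le0.
lra.
Qed.

Lemma prod_shift_lt {R : realFieldType} (r : R) (n : nat)
    (x y : 'I_n -> R) (X Y : R) :
  0 <= r ->
  (forall i, r < x i /\ x i <= y i) ->
  (forall i, x i <= Y) ->
  X * \prod_(i < n) x i < Y * \prod_(i < n) y i ->
  (X - r) * \prod_(i < n) (x i - r) < (Y - r) * \prod_(i < n) (y i - r).
Proof.
move=> r_ge0; elim: n x y X Y => [|n IH] x y X Y hxy hY.
  by rewrite !big_ord0 !mulr1 => ?; lra.
rewrite !big_ord_recr /=.
set xn := x ord_max; set yn := y ord_max.
have [rxn xyn] : r < xn /\ xn <= yn := hxy ord_max.
have xnY : xn <= Y := hY ord_max.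
have xn_gt0 : 0 < xn by lra.
pose Y' := Y * yn / xn.
have YY' : Y <= Y'.
  by rewrite /Y' ler_pdivlMr // ler_pM2l //; lra.
set Px := \prod_(i < n) _; set Py := \prod_(i < n) _ => hP.
have hP' : X * Px < Y' * Py.
  rewrite -(ltr_pM2r xn_gt0) -mulrA.
  have -> : Y' * Py * xn = Y * (Py * yn) by rewrite /Y'; field; rewrite gt_eqF.
  exact: hP.
have IHn := IH (fun i => x (widen_ord (leqnSn n) i))
  (fun i => y (widen_ord (leqnSn n) i)) X Y' (fun i => hxy _)
  (fun i => le_trans (hY _) YY') hP'.
set Qx := \prod_(i < n) _ in IHn *; set Qy := \prod_(i < n) _ in IHn *.
have Qy_gt0 : 0 < Qy.
  by apply: prodr_gt0 => i _; have := hxy (widen_ord (leqnSn n) i); lra.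
have shift := shift_absorb_le r xn yn Y r_ge0 rxn xyn xnY.
have lt1 : (X - r) * Qx * (xn - r) < (Y' - r) * Qy * (xn - r).
  by rewrite ltr_pM2r ?subr_gt0.
have le2 : (Y' - r) * (xn - r) * Qy <= (Y - r) * (yn - r) * Qy.
  by rewrite ler_pM2r.
rewrite !mulrA; apply: (lt_le_trans lt1).
by rewrite -mulrA (mulrC Qy) mulrA (le_trans le2) // -!mulrA (mulrC Qy).
Qed.

Theorem lemma2p1 (R : realType) (r s : nat) (x y : 'I_s -> R) (X Y : R) :
  (0 < r)%N -> (0 < s)%N ->
  (forall i, r%:R < x i /\ x i <= y i) ->
  (forall i, x i <= Y) ->
  X * \prod_(i < s) x i < Y * \prod_(i < s) y i ->
  (X - r%:R) * \prod_(i < s) (x i - r%:R) < (Y - r%:R) * \prod_(i < s) (y i - r%:R).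
Proof.
move=> _ _; exact/prod_shift_lt/ler0n.
Qed.
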